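(* A graph is isomorphic to $KB(G)$ for some bipartite graph $G$ if and only if it is isomorphic to $H^2$ for some IIC-comparability graph $H$. That is, $KB(\text{bipartite})=(\text{IIC-comparability})^2$.
   Context: All graphs are finite and simple. A biclique of a graph $G$ is a set $P\subseteq V(G)$ such that the induced subgraph $G[P]$ is a complete bipartite graph with both parts nonempty, and $P$ is inclusion-maximal with this property. The biclique graph $KB(G)$ has the set of bicliques of $G$ as vertex set, two distinct bicliques being adjacent iff they intersect. For a graph $H$, the square $H^2$ has vertex set $V(H)$, two distinct vertices being adjacent iff their distance in $H$ is at most $2$. For a poset $\mathcal{P}=(C,\le)$ and $x\in C$, let $I^-_{\mathcal{P}}(x)=\{y\in C: y\le x\}$ and $I^+_{\mathcal{P}}(x)=\{y\in C: x\le y\}$; $\mathcal{P}$ is interval intersection closed (IIC) if for all $u,v\in C$: whenever $I^-_{\mathcal{P}}(u)\cap I^-_{\mathcal{P}}(v)\neq\emptyset$ there is $w\in C$ with $I^-_{\mathcal{P}}(w)=I^-_{\mathcal{P}}(u)\cap I^-_{\mathcal{P}}(v)$, and whenever $I^+_{\mathcal{P}}(u)\cap I^+_{\mathcal{P}}(v)\neq\emptyset$ there is $w\in C$ with $I^+_{\mathcal{P}}(w)=I^+_{\mathcal{P}}(u)\cap I^+_{\mathcal{P}}(v)$. The comparability graph of a poset $(C,\le)$ has vertex set $C$, two distinct elements adjacent iff they are comparable. A graph is IIC-comparability if it is the comparability graph of some (finite) IIC poset. *)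

From HB Require Import structures.
From mathcomp Require Import all_boot all_order.
Set Implicit Arguments. Unset Strict Implicit. Unset Printing Implicit Defensive.
Import Order.Theory.

Definition simple_graph (T : finType) (e : rel T) : Prop :=
  symmetric e /\ irreflexive e.

Definition graph_iso (T1 T2 : finType) (e1 : rel T1) (e2 : rel T2) : Prop :=
  exists f : T1 -> T2, bijective f /\ forall x y, e2 (f x) (f y) = e1 x y.

Definition bipartite (T : finType) (e : rel T) : Prop :=
  exists c : T -> bool, forall x y, e x y -> c x != c y.

Definition is_cbip (T : finType) (e : rel T) (P : {set T}) : bool :=
  [exists A : {set T}, exists B : {set T},
    [&& A :|: B == P, [disjoint A & B], A != set0, B != set0 &
       [forall x in P, forall y in P,
          e x y == ((x \in A) && (y \in B)) || ((x \in B) && (y \in A))]]].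

Definition biclique (T : finType) (e : rel T) (P : {set T}) : bool :=
  maxset (is_cbip e) P.

Definition KB_type (T : finType) (e : rel T) : finType :=
  {P : {set T} | biclique e P}.

Definition KB_rel (T : finType) (e : rel T) : rel (KB_type e) :=
  fun P Q => (val P != val Q) && (val P :&: val Q != set0).

Definition square (T : finType) (e : rel T) : rel T :=
  fun x y => (x != y) && (e x y || [exists z, e x z && e z y]).

Definition comp_rel (d : Order.disp_t) (C : porderType d) : rel C :=
  fun x y => (x != y) && (x >=< y)%O.

Definition IIC (d : Order.disp_t) (C : porderType d) : Prop :=
  forall u v : C,
    ((exists y : C, (y <= u)%O && (y <= v)%O) ->
       exists w : C, forall y : C, (y <= w)%O = (y <= u)%O && (y <= v)%O) /\
    ((exists y : C, (u <= y)%O && (v <= y)%O) ->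
       exists w : C, forall y : C, (w <= y)%O = (u <= y)%O && (v <= y)%O).

Arguments KB_rel {T} e.
Arguments square {T} e.
Arguments comp_rel {d} C.
Arguments is_cbip {T} e P.
Arguments biclique {T} e P.

From HB Require Import structures.
From mathcomp Require Import all_boot all_order.
Set Implicit Arguments. Unset Strict Implicit. Unset Printing Implicit Defensive.
Import Order.Theory.

(* Fix a bipartite graph G with a proper 2-colouring c.  For S a set of vertices
   let N(S) be its common neighbourhood.  A set P is a biclique iff both of its
   colour classes P_b are nonempty and N(P_b) = P_(~b): a biclique is a pair of
   mutually "closed" sets of the Galois connection S |-> N(S).  Ordering the
   bicliques by inclusion of their true-coloured sides (equivalently, reverse
   inclusion of their false-coloured sides) gives a poset in which
   - two bicliques P, Q with P_b :&: Q_b nonempty have a biclique R with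
     R_b = P_b :&: Q_b, since intersections of closed sets are closed; this yields
     the IIC property, and
   - P and Q intersect iff they have a common lower or upper bound, which is
     exactly adjacency in the square of the comparability graph.
   Conversely, an IIC poset C is realised by the bipartite graph on two copies of C
   with a ~ b' iff a <= b: its bicliques are exactly the principal ones
   {a | a <= w} + {b' | w <= b}; surjectivity uses the IIC meet of the upper side.
   Both directions rely on the same description of the square of a comparability
   graph by common bounds (square_compE). *)

Definition common_bound (d : Order.disp_t) (C : finPOrderType d) (u v : C) : bool :=
  [exists z, ((z <= u) && (z <= v)) || ((u <= z) && (v <= z))]%O.

Lemma square_compE (d : Order.disp_t) (C : finPOrderType d) (u v : C) :
  square (comp_rel C) u v = (u != v) && common_bound u v.
Proof.
rewrite /square /comp_rel; case: eqVneq => [//|neq_uv] /=.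
apply/idP/existsP => [/orP[cmp_uv|/existsP[z /andP[/andP[_ cmp_uz] /andP[_ cmp_zv]]]]|].
- by case/orP: cmp_uv => le_uv; [exists u | exists v]; rewrite lexx le_uv.
- case/orP: cmp_uz => [le_uz|le_zu]; case/orP: cmp_zv => [le_zv|le_vz].
  + by exists u; rewrite lexx (le_trans le_uz le_zv).
  + by exists z; rewrite le_uz le_vz orbT.
  + by exists z; rewrite le_zu le_zv.
  + by exists v; rewrite lexx (le_trans le_vz le_zu).
case=> z bound_z; have [cmp_uz cmp_zv] : (u >=< z)%O /\ (z >=< v)%O.
  by case/orP: bound_z => /andP[le1 le2]; rewrite /Order.comparable le1 le2 !orbT.
have [<-|neq_zu] := eqVneq z u; first by rewrite cmp_zv.
have [<-|neq_zv] := eqVneq z v; first by rewrite cmp_uz.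
by apply/orP; right; apply/existsP; exists z; rewrite eq_sym neq_zu neq_zv cmp_uz cmp_zv.
Qed.

Lemma neq_negb (a b : bool) : (a != b) = (a == ~~ b).
Proof. by case: a; case: b. Qed.

Definition side (V : finType) (c : V -> bool) (P : {set V}) (b : bool) : {set V} :=
  P :&: [set v | c v == b].

Lemma in_side (V : finType) (c : V -> bool) P b v :
  (v \in side c P b) = (v \in P) && (c v == b).
Proof. by rewrite !inE. Qed.

Lemma sides_cover (V : finType) (c : V -> bool) (P : {set V}) :
  side c P true :|: side c P false = P.
Proof. by apply/setP => v; rewrite !in_setU !in_side -andb_orr; case: (c v); rewrite andbT. Qed.

Lemma sideU (V : finType) (c : V -> bool) (A B : {set V}) b :
  side c (A :|: B) b = side c A b :|: side c B b.
Proof. exact: setIUl. Qed.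

Definition common_nbhd (V : finType) (g : rel V) (S : {set V}) : {set V} :=
  [set v | [forall x in S, g x v]].

Section Bicliques.
Variables (V : finType) (g : rel V) (c : V -> bool).
Hypothesis g_sym : symmetric g.
Hypothesis c_proper : forall x y, g x y -> c x != c y.

Local Notation N := (common_nbhd g).
Local Notation side := (side c).

Lemma common_nbhdP (S : {set V}) v : reflect (forall x, x \in S -> g x v) (v \in N S).
Proof. by rewrite inE; apply: (iffP forall_inP). Qed.

Lemma common_nbhdS (S S' : {set V}) : S \subset S' -> N S' \subset N S.
Proof.
move=> sub_SS'; apply/subsetP => v /common_nbhdP adj_S'v.
by apply/common_nbhdP => x /(subsetP sub_SS'); apply: adj_S'v.
Qed.

Lemma sub_common_nbhdC (A B : {set V}) : (A \subset N B) = (B \subset N A).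
Proof.
suff imp (A' B' : {set V}) : A' \subset N B' -> B' \subset N A' by apply/idP/idP; apply: imp.
move=> /subsetP sub_AB; apply/subsetP => y yB; apply/common_nbhdP => x /sub_AB.
by move/common_nbhdP/(_ y yB); rewrite g_sym.
Qed.

Lemma sub_common_nbhd2 (S : {set V}) : S \subset N (N S).
Proof. by rewrite sub_common_nbhdC. Qed.

Lemma common_nbhd_colour (S : {set V}) x v : x \in S -> v \in N S -> c v = ~~ c x.
Proof. by move=> xS /common_nbhdP/(_ x xS)/c_proper; case: (c x); case: (c v). Qed.

Lemma cbip_adjE (P : {set V}) : is_cbip g P ->
  (forall b, side P b != set0) /\ {in P &, forall x y, g x y = (c x != c y)}.
Proof.
case/existsP=> A /existsP[B] /and5P[/eqP defP disjAB /set0Pn[a0 a0A] /set0Pn[b0 b0B]].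
move=> /forall_inP adjAB.
have inP x : x \in A \/ x \in B -> x \in P by rewrite -defP inE => /orP.
have a0P : a0 \in P by apply: inP; left.
have b0P : b0 \in P by apply: inP; right.
have inBE x : x \in P -> (x \in B) = ~~ (x \in A).
  rewrite -defP inE => /orP[xA|xB]; first by rewrite xA (disjointFr disjAB xA).
  by rewrite xB (disjointFl disjAB xB).
have adjPE x y : x \in P -> y \in P -> g x y = (x \in A) (+) (y \in A).
  move=> xP yP; move/forall_inP: (adjAB x xP) => /(_ y yP)/eqP ->.
  by rewrite !inBE //; case: (x \in A); case: (y \in A).
have b0A : b0 \in A = false by apply: (disjointFl disjAB).
have colP x : x \in P -> c x = (x \in A) (+) c b0.
  move=> xP; case xA: (x \in A).
    have /c_proper : g x b0 by rewrite adjPE // xA b0A.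
    by case: (c x); case: (c b0).
  have /c_proper : g a0 x by rewrite adjPE // xA a0A.
  have /c_proper : g a0 b0 by rewrite adjPE // a0A b0A.
  by case: (c x); case: (c b0); case: (c a0).
split=> [b|x y xP yP]; last first.
  rewrite adjPE // (colP x xP) (colP y yP).
  by case: (x \in A); case: (y \in A); case: (c b0).
apply/set0Pn; case: (boolP (c a0 == b)) => [ca0|ca0].
  by exists a0; rewrite in_side a0P.
by exists b0; rewrite in_side b0P; move: ca0; rewrite (colP a0 a0P) a0A; case: b; case: (c b0).
Qed.

Lemma cbipP (P : {set V}) :
  is_cbip g P <->
  (forall b, side P b != set0) /\ {in P &, forall x y, g x y = (c x != c y)}.
Proof.
split=> [|[sidesP adjP]]; first exact: cbip_adjE.
apply/existsP; exists (side P true); apply/existsP; exists (side P false).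
rewrite sides_cover eqxx !sidesP /=; apply/andP; split.
  rewrite -setI_eq0; apply/eqP/setP => v; rewrite !inE.
  by case: (v \in P); case: (c v).
apply/forall_inP => x xP; apply/forall_inP => y yP.
by rewrite !in_side xP yP adjP //; case: (c x); case: (c y).
Qed.

Lemma adj_same_colour x y : c x = c y -> g x y = false.
Proof. by move=> cxy; apply: contraTF (c_proper (x := x) (y := y)) _; rewrite cxy eqxx. Qed.

Lemma side_adj (P : {set V}) b x y :
  {in P &, forall x y, g x y = (c x != c y)} ->
  x \in side P b -> y \in side P (~~ b) -> g x y.
Proof.
move=> adjP; rewrite !in_side => /andP[xP /eqP cx] /andP[yP /eqP cy].
by rewrite adjP // cx cy; case: b {cx cy}.
Qed.

Lemma biclique_side_neq0 (P : {set V}) b : biclique g P -> side P b != set0.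
Proof. by move/maxsetp/cbip_adjE => [sidesP _]. Qed.

(* Maximality: each side of a biclique is the common neighbourhood of the other,
   since adding N(P_b) to P keeps the set complete bipartite. *)
Lemma biclique_nbhd (P : {set V}) b : biclique g P -> N (side P b) = side P (~~ b).
Proof.
move=> bicP; have [sidesP adjP] := cbip_adjE (maxsetp bicP).
set M := N (side P b).
have colM y : y \in M -> c y = ~~ b.
  case/set0Pn: (sidesP b) => x xPb /(common_nbhd_colour xPb).
  by move: xPb; rewrite in_side => /andP[_ /eqP ->].
have side_sub : side P (~~ b) \subset M.
  by apply/subsetP => y yP; apply/common_nbhdP => x xP; apply: side_adj yP.
have cbipPM : is_cbip g (P :|: M).
  apply/cbipP; split=> [b'|x y].
    by apply: subset_neq0 (sidesP b'); apply/setSI/subsetUl.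
  have adjPM u w : u \in P -> w \in M -> g u w = (c u != c w).
    move=> uP wM; rewrite (colM w wM); case: (eqVneq (c u) b) => [cu|].
      by rewrite cu (common_nbhdP _ _ wM) ?in_side ?uP ?cu //; rewrite -cu; case: (c u).
    by rewrite neq_negb => /eqP cu; rewrite adj_same_colour ?cu ?colM ?eqxx.
  rewrite !in_setU => /orP[xP|xM] /orP[yP|yM]; [exact: adjP|exact: adjPM|..].
  - by rewrite g_sym adjPM // eq_sym.
  - by rewrite adj_same_colour ?colM ?eqxx.
have subMP : M \subset P by rewrite -(maxsetsup bicP cbipPM (subsetUl _ _)) subsetUr.
apply/eqP; rewrite eqEsubset side_sub andbT.
by apply/subsetP => y yM; rewrite in_side (subsetP subMP y yM) (colM y yM) eqxx.
Qed.

Lemma closed_sides_biclique (P : {set V}) :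
  (forall b, side P b != set0 /\ N (side P b) = side P (~~ b)) -> biclique g P.
Proof.
move=> closedP.
have adjP : {in P &, forall x y, g x y = (c x != c y)}.
  move=> x y xP yP; case: (eqVneq (c x) (c y)) => [cxy|ncxy]; first exact: adj_same_colour.
  have [_ closed] := closedP (c x).
  have : y \in N (side P (c x)) by rewrite closed in_side yP -neq_negb eq_sym.
  by move/common_nbhdP; apply; rewrite in_side xP eqxx.
have cbipP' : is_cbip g P by apply/cbipP; split=> // b; case: (closedP b).
apply/maxsetP; split=> // Q /cbipP[_ adjQ] subPQ; apply/eqP; rewrite eqEsubset subPQ andbT.
apply/subsetP => v vQ; have [_ closed] := closedP (~~ c v).
have : v \in side P (~~ ~~ c v).
  rewrite -closed; apply/common_nbhdP => x; rewrite in_side => /andP[xP /eqP cx].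
  have xQ : x \in Q := subsetP subPQ x xP.
  by rewrite adjQ // cx; case: (c v).
by rewrite in_side => /andP[].
Qed.

Lemma side_monochrome (S : {set V}) b :
  (forall x, x \in S -> c x = b) -> side S b = S /\ side S (~~ b) = set0.
Proof.
move=> colS; split; apply/setP => v; rewrite in_side ?inE;
  case: (boolP (v \in S)) => // /colS ->; rewrite ?eqxx //.
by case: (b).
Qed.

Section ClosedSet.
Variables (A : {set V}) (b : bool).
Hypothesis A_colour : forall x, x \in A -> c x = b.
Hypothesis A_neq0 : A != set0.

Lemma side_closed_pair : side (A :|: N A) b = A /\ side (A :|: N A) (~~ b) = N A.
Proof.
have col_N y : y \in N A -> c y = ~~ b.
  by case/set0Pn: A_neq0 => a aA /(common_nbhd_colour aA) ->; rewrite A_colour.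
have [sideA sideA'] := side_monochrome A_colour.
have [sideN' sideN] := side_monochrome col_N; rewrite negbK in sideN.
by rewrite !sideU sideA sideA' sideN sideN' setU0 set0U.
Qed.

Lemma closed_biclique : N A != set0 -> N (N A) = A -> biclique g (A :|: N A).
Proof.
move=> NA_neq0 NNA; have [sideA sideN] := side_closed_pair.
apply: closed_sides_biclique => b'.
have [->|->] : b' = b \/ b' = ~~ b by case: b'; case: (b); auto.
  by rewrite sideA sideN.
by rewrite negbK sideA sideN.
Qed.
End ClosedSet.

Lemma biclique_side_antitone (P Q : {set V}) b : biclique g P -> biclique g Q ->
  side P b \subset side Q b -> side Q (~~ b) \subset side P (~~ b).
Proof. by move=> bicP bicQ; rewrite -!biclique_nbhd //; apply: common_nbhdS. Qed.

Lemma biclique_side_subE (P Q : {set V}) b : biclique g P -> biclique g Q ->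
  (side P b \subset side Q b) = (side Q (~~ b) \subset side P (~~ b)).
Proof.
move=> bicP bicQ; apply/idP/idP; first exact: biclique_side_antitone.
by move/(biclique_side_antitone bicQ bicP); rewrite negbK.
Qed.

(* Intersections of same-coloured sides of bicliques are again sides of
   bicliques, when nonempty: this provides the meets needed for IIC. *)
Lemma biclique_meet (P Q : {set V}) b : biclique g P -> biclique g Q ->
  side P b :&: side Q b != set0 ->
  exists2 R, biclique g R & side R b = side P b :&: side Q b.
Proof.
move=> bicP bicQ S_neq0; set S := side P b :&: side Q b.
have S_colour x : x \in S -> c x = b by rewrite !inE => /andP[/andP[_ /eqP]].
have nbhd_sub R : biclique g R -> S \subset side R b -> N (N S) \subset side R b.
  move=> bicR /common_nbhdS; rewrite biclique_nbhd // => /common_nbhdS.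
  by rewrite biclique_nbhd // negbK.
have NS_neq0 : N S != set0.
  apply: subset_neq0 (biclique_side_neq0 (~~ b) bicP).
  by rewrite -biclique_nbhd //; apply/common_nbhdS/subsetIl.
have NNS : N (N S) = S.
  apply/eqP; rewrite eqEsubset sub_common_nbhd2 andbT subsetI.
  by rewrite !nbhd_sub ?subsetIl ?subsetIr.
exists (S :|: N S); first exact: closed_biclique S_colour S_neq0 NS_neq0 NNS.
by have [] := side_closed_pair S_colour S_neq0.
Qed.

End Bicliques.

(* Stating both conditions makes antisymmetry hold for any
   graph; for bicliques of a properly coloured graph either one suffices. *)
Definition biclique_le (V : finType) (g : rel V) (c : V -> bool) (P Q : KB_type g) : bool :=
  (side c (val P) true \subset side c (val Q) true) &&
  (side c (val Q) false \subset side c (val P) false).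

Definition KB_poset (V : finType) (g : rel V) (c : V -> bool) : Type := KB_type g.
HB.instance Definition _ V g c := Finite.on (@KB_poset V g c).

Lemma biclique_le_refl V g c : reflexive (@biclique_le V g c).
Proof. by move=> P; rewrite /biclique_le !subxx. Qed.

Lemma biclique_le_trans V g c : transitive (@biclique_le V g c).
Proof.
move=> Q P R /andP[PQt QPf] /andP[QRt RQf].
by rewrite /biclique_le (subset_trans PQt QRt) (subset_trans RQf QPf).
Qed.

Lemma biclique_le_anti V g c : antisymmetric (@biclique_le V g c).
Proof.
move=> P Q /andP[/andP[PQt QPf] /andP[QPt PQf]]; apply: val_inj.
rewrite -(sides_cover c (val P)) -(sides_cover c (val Q)).
by congr (_ :|: _); apply/eqP; rewrite eqEsubset ?PQt ?QPt ?PQf ?QPf.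
Qed.

HB.instance Definition _ V g c := Order.Le_isPOrder.Build (Order.Disp tt tt)
  (@KB_poset V g c) (@biclique_le_refl V g c) (@biclique_le_anti V g c)
  (@biclique_le_trans V g c).

Section BicliqueOrder.
Variables (V : finType) (g : rel V) (c : V -> bool).
Hypothesis g_sym : symmetric g.
Hypothesis c_proper : forall x y, g x y -> c x != c y.
Local Notation side := (side c).
Local Notation KB := (KB_poset g c).
Local Open Scope order_scope.

Lemma KB_le_true (P Q : KB) : (P <= Q) = (side (val P) true \subset side (val Q) true).
Proof.
apply: andb_idr; rewrite (biclique_side_subE g_sym c_proper) //; exact: valP.
Qed.

Lemma KB_le_false (P Q : KB) : (P <= Q) = (side (val Q) false \subset side (val P) false).
Proof.
apply: andb_idl; rewrite (biclique_side_subE g_sym c_proper) //; exact: valP.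
Qed.

Lemma KB_meet (u v : KB) b : side (val u) b :&: side (val v) b != set0 ->
  exists R : KB, side (val R) b = side (val u) b :&: side (val v) b.
Proof.
case/(biclique_meet g_sym c_proper (valP u) (valP v)) => R bicR sideR.
by exists (exist _ R bicR : KB_type g).
Qed.

Lemma KB_common_side (y u v : KB) b :
  side (val y) b \subset side (val u) b -> side (val y) b \subset side (val v) b ->
  side (val u) b :&: side (val v) b != set0.
Proof.
move=> yu yv; apply: subset_neq0 (biclique_side_neq0 c_proper b (valP y)).
by rewrite subsetI yu yv.
Qed.

(* Common lower bounds give a true-side meet, common upper bounds a false-side
   meet. *)
Lemma KB_IIC : IIC KB.
Proof.
move=> u v; split=> -[y /andP[]].
  rewrite !KB_le_true => yu yv; have [R sideR] := KB_meet (KB_common_side yu yv).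
  by exists R => z; rewrite !KB_le_true sideR subsetI.
rewrite !KB_le_false => yu yv; have [R sideR] := KB_meet (KB_common_side yu yv).
by exists R => z; rewrite !KB_le_false sideR subsetI.
Qed.

(* Bicliques intersect iff they have a common bound: a shared vertex of colour b
   yields the meet of the b-sides. *)
Lemma KB_intersectE (P Q : KB) : (val P :&: val Q != set0) = common_bound P Q.
Proof.
apply/idP/existsP => [/set0Pn[x]|[R /orP[] /andP[]]]; last first.
- rewrite !KB_le_false => PR QR; apply: subset_neq0 (KB_common_side PR QR).
  by apply: setISS; apply: subsetIl.
- rewrite !KB_le_true => RP RQ; apply: subset_neq0 (KB_common_side RP RQ).
  by apply: setISS; apply: subsetIl.
rewrite inE => /andP[xP xQ].
have : side (val P) (c x) :&: side (val Q) (c x) != set0.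
  by apply/set0Pn; exists x; rewrite !inE xP xQ eqxx.
case/KB_meet => R sideR; exists R.
case: (c x) sideR => sideR; apply/orP; [left|right].
  by rewrite !KB_le_true sideR subsetIl subsetIr.
by rewrite !KB_le_false sideR subsetIl subsetIr.
Qed.

Lemma KB_square (P Q : KB) : KB_rel g P Q = square (comp_rel KB) P Q.
Proof. by rewrite square_compE -KB_intersectE /KB_rel val_eqE. Qed.

End BicliqueOrder.

Section PosetBicliques.
Variables (d : Order.disp_t) (C : finPOrderType d).
Local Open Scope order_scope.

Lemma IIC_seq_meet (iic : IIC C) (s : seq C) (a : C) :
  s != [::] -> all (fun b => a <= b) s ->
  exists w, forall y, (y <= w) = all (fun b => y <= b) s.
Proof.
elim: s => [//|b [|b' s] IHs] _ /= /andP[le_ab le_as]; first by exists b => y; rewrite andbT.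
have [w' meet_w'] := IHs isT le_as.
have [w meet_w] : exists w, forall y, (y <= w) = (y <= b) && (y <= w').
  by apply: (iic b w').1; exists a; rewrite le_ab meet_w'.
by exists w => y; rewrite meet_w meet_w'.
Qed.

Definition le_graph : rel (C + C) := fun x y =>
  match x, y with inl a, inr b | inr b, inl a => a <= b | _, _ => false end.

Definition is_left (v : C + C) : bool := if v is inl _ then true else false.

Lemma le_graph_sym : symmetric le_graph. Proof. by move=> [a|a] [b|b]. Qed.
Lemma le_graph_irr : irreflexive le_graph. Proof. by move=> [a|a]. Qed.
Lemma le_graph_proper x y : le_graph x y -> is_left x != is_left y.
Proof. by case: x; case: y. Qed.

Local Notation N := (common_nbhd le_graph).

Definition lower_copy (w : C) : {set C + C} := [set v | if v is inl a then a <= w else false].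
Definition upper_copy (w : C) : {set C + C} := [set v | if v is inr b then w <= b else false].

Lemma nbhd_lower_copy w : N (lower_copy w) = upper_copy w.
Proof.
apply/setP => -[a|b]; rewrite !inE.
  by apply/forall_inP => /(_ (inl w)); rewrite inE lexx => /(_ isT).
apply/forall_inP/idP => [/(_ (inl w))|le_wb [a'|b']]; rewrite inE ?lexx //.
- by apply.
- by move=> le_a'w; apply: le_trans le_wb.
Qed.

Lemma nbhd_upper_copy w : N (upper_copy w) = lower_copy w.
Proof.
apply/setP => -[a|b]; rewrite !inE; last first.
  by apply/forall_inP => /(_ (inr w)); rewrite inE lexx => /(_ isT).
apply/forall_inP/idP => [/(_ (inr w))|le_aw [a'|b']]; rewrite inE ?lexx //.
- by apply.
- exact: le_trans le_aw.
Qed.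

Definition principal_biclique (w : C) : {set C + C} := lower_copy w :|: upper_copy w.

Lemma principal_bicliqueP w : biclique le_graph (principal_biclique w).
Proof.
rewrite /principal_biclique -nbhd_lower_copy.
apply: (closed_biclique le_graph_proper (b := true)).
- by move=> [a|b]; rewrite inE.
- by apply/set0Pn; exists (inl w); rewrite inE.
- by rewrite nbhd_lower_copy; apply/set0Pn; exists (inr w); rewrite inE.
- by rewrite nbhd_lower_copy nbhd_upper_copy.
Qed.

Lemma principal_biclique_inj : injective principal_biclique.
Proof.
move=> u v /setP eq_uv; apply: le_anti.
have := eq_uv (inl u); have := eq_uv (inl v).
by rewrite !inE !lexx !orbF => -> <-.
Qed.

Lemma principal_biclique_intersectE u v :
  (principal_biclique u :&: principal_biclique v != set0) = common_bound u v.
Proof.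
apply/set0Pn/existsP => [[[a|b]]|[z /orP[] /andP[le1 le2]]]; rewrite ?inE /=.
- by rewrite !orbF => /andP[le1 le2]; exists a; rewrite le1 le2.
- by move=> /andP[le1 le2]; exists b; rewrite le1 le2 orbT.
- by exists (inl z); rewrite !inE le1 le2.
- by exists (inr z); rewrite !inE le1 le2.
Qed.

(* Every biclique is principal: its left side is N of its right side, i.e. the
   common lower bounds of a nonempty bounded-below family, which by IIC form the
   down-set of a single w. *)
Lemma principal_biclique_surj (iic : IIC C) (P : {set C + C}) :
  biclique le_graph P -> exists w, P = principal_biclique w.
Proof.
move=> bicP; set B := [set b | inr b \in P].
have side_true x : x \in side is_left P true -> exists2 a, x = inl a & inl a \in P.
  by case: x => [a|b]; rewrite in_side /= ?andbT ?andbF //; exists a.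
have [a0 a0P] : exists a0, inl a0 \in P.
  case/set0Pn: (biclique_side_neq0 le_graph_proper true bicP) => x.
  by case/side_true => a _ aP; exists a.
have le_a0B : all (fun b => a0 <= b) (enum B).
  apply/allP => b; rewrite mem_enum inE => bP.
  have : inr b \in N (side is_left P true).
    by rewrite (biclique_nbhd le_graph_sym le_graph_proper) // in_side bP.
  by move/common_nbhdP/(_ (inl a0)); apply; rewrite in_side a0P.
have [b0 b0P] : exists b0, inr b0 \in P.
  case/set0Pn: (biclique_side_neq0 le_graph_proper false bicP).
  by case=> [a|b]; rewrite in_side /= ?andbF ?andbT // => bP; exists b.
have B_neq : enum B != [::].
  have : b0 \in enum B by rewrite mem_enum inE.
  by case: (enum B).
have [w meet_w] := IIC_seq_meet iic B_neq le_a0B.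
have side_false_E : N (side is_left P false) = lower_copy w.
  apply/setP => -[y|z]; rewrite [in RHS]inE.
    rewrite meet_w; apply/common_nbhdP/allP => [adj_y b|le_yB [a|b]].
    - by rewrite mem_enum inE => bP; apply: (adj_y (inr b)); rewrite in_side bP.
    - by rewrite in_side /= andbF.
    - by rewrite in_side /= andbT => bP; apply: le_yB; rewrite mem_enum inE.
  by apply/common_nbhdP => /(_ (inr b0)); rewrite in_side b0P => /(_ isT).
have side_true_E : side is_left P true = lower_copy w.
  by rewrite -side_false_E (biclique_nbhd le_graph_sym le_graph_proper).
have side_false_E' : side is_left P false = upper_copy w.
  by rewrite -[false]/(~~ true) -(biclique_nbhd le_graph_sym le_graph_proper) //
    side_true_E nbhd_lower_copy.
by exists w; rewrite -(sides_cover is_left P) side_true_E side_false_E'.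
Qed.

Definition principal_KB (w : C) : KB_type le_graph :=
  exist _ (principal_biclique w) (principal_bicliqueP w).

Lemma principal_KB_bij (iic : IIC C) : bijective principal_KB.
Proof.
have surj (P : KB_type le_graph) : exists w, principal_KB w == P.
  have [w defP] := principal_biclique_surj iic (valP P).
  by exists w; apply/eqP/val_inj.
exists (fun P => xchoose (surj P)) => [w|P]; last exact/eqP/(xchooseP (surj P)).
by apply: principal_biclique_inj; move/eqP/(congr1 val): (xchooseP (surj (principal_KB w))).
Qed.

Lemma principal_KB_square u v :
  KB_rel le_graph (principal_KB u) (principal_KB v) = square (comp_rel C) u v.
Proof.
by rewrite square_compE /KB_rel /= (inj_eq principal_biclique_inj) principal_biclique_intersectE.
Qed.

End PosetBicliques.

Theorem corollary6 (T : finType) (e : rel T) (He : simple_graph e) :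
  (exists (V : finType) (g : rel V),
      simple_graph g /\ bipartite g /\ graph_iso e (KB_rel g)) <->
  (exists (d : Order.disp_t) (C : finPOrderType d),
      IIC C /\ graph_iso e (square (comp_rel C))).
Proof.
split.
  (* KB(g) is the square of the comparability graph of the biclique poset *)
  case=> V [g [[g_sym _] [[c c_proper] [f [f_bij f_iso]]]]].
  exists (Order.Disp tt tt), (KB_poset g c); split; first exact: KB_IIC.
  exists (f : T -> KB_poset g c); split=> // x y.
  by rewrite -(KB_square g_sym c_proper) f_iso.
(* an IIC poset C is the biclique poset of le_graph, via principal bicliques *)
case=> d [C [iic [f [f_bij f_iso]]]].
exists (C + C)%type, (@le_graph d C).
split; first by split; [exact: le_graph_sym | exact: le_graph_irr].
split; first by exists (@is_left d C); exact: le_graph_proper.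
exists (principal_KB (C := C) \o f); split; first exact: bij_comp (principal_KB_bij iic) f_bij.
by move=> x y; rewrite /= principal_KB_square f_iso.
Qed.
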